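(* Let $\mathcal F\subset\mathcal G\subset 2^{[n]}$, where $\mathcal G$ is a down-set and $\mathcal F$ is intersecting. If $\tau(\mathcal F)\le 2$, then $$|\mathcal F|\le \max_{x\in[n]}\big|\{G\in\mathcal G: x\in G\}\big|.$$
   Context: $[n]=\{1,\dots,n\}$. A family $\mathcal G\subset 2^{[n]}$ is a down-set if $B\in\mathcal G$ and $A\subset B$ imply $A\in\mathcal G$. A family $\mathcal F$ is intersecting if $A\cap B\ne\emptyset$ for all $A,B\in\mathcal F$. For a family $\mathcal F$ of non-empty sets, the covering number $\tau(\mathcal F)$ is the minimal integer $t$ such that there is a $t$-element set $T$ with $T\cap F\neq\emptyset$ for all $F\in\mathcal F$. *)

From mathcomp Require Import all_boot.
Set Implicit Arguments. Unset Strict Implicit. Unset Printing Implicit Defensive.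

(* Ground set [n] is represented by 'I_n (elements 0..n-1). *)
Definition down_set n (G : {set {set 'I_n}}) : Prop :=
  forall A B : {set 'I_n}, B \in G -> A \subset B -> A \in G.

Definition intersecting n (F : {set {set 'I_n}}) : Prop :=
  forall A B, A \in F -> B \in F -> A :&: B != set0.

Definition covers n (T : {set 'I_n}) (F : {set {set 'I_n}}) : bool :=
  [forall A in F, T :&: A != set0].

(* covering number: least size of a set meeting every member of F
   (the default value n is only reached when no cover exists, i.e. set0 \in F). *)
Definition tau n (F : {set {set 'I_n}}) : nat :=
  \big[minn/n]_(T : {set 'I_n} | covers T F) #|T|.

Definition degree n (G : {set {set 'I_n}}) (x : 'I_n) : nat :=
  #|[set B in G | x \in B]|.

(** The members of [F] avoiding [x] all contain [y] and those avoiding [y]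
    all contain [x]. For [a], [b] in [F] with [x] in [a] but not in [b], the
    set [a \ b] lies in [G] (a down-set), contains [x], and is not in [F]
    since it misses [b]; so [|F| <= deg_G x] as soon as these differences are
    at least as many as the members of [F] avoiding [x]. The Marica-Schönheim
    inequality [|X| |Y| <= |X \ Y| |Y \ X|], a consequence of Daykin's
    inequality [|A| |B| <= |A v B| |A ^ B|], applied to the members avoiding
    [y] and those avoiding [x], guarantees this for [x] or for [y]. *)

From mathcomp Require Import all_boot zify.
Set Implicit Arguments. Unset Strict Implicit. Unset Printing Implicit Defensive.

Lemma four_functions_two_point (a0 a1 b0 b1 c0 c1 d0 d1 : nat) :
  a0 * b0 <= c0 * d0 -> a0 * b1 <= c1 * d0 -> a1 * b0 <= c1 * d0 ->
  a1 * b1 <= c1 * d1 ->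
  (a0 + a1) * (b0 + b1) <= (c0 + c1) * (d0 + d1).
Proof.
move=> h00 h01 h10 h11.
set K := c1 * d0 in h01 h10.
have [K0|Kpos] := posnP K; first nia.
(* With [K = a0 b1 + r = a1 b0 + s], the identity [a0 b0 a1 b1 = a0 b1 a1 b0]
   turns [(a0 b0 + K) (K + a1 b1)] into [K (a0 + a1) (b0 + b1) + r s]. *)
have [r Kr] : exists r, K = a0 * b1 + r by exists (K - a0 * b1); lia.
have [s Ks] : exists s, K = a1 * b0 + s by exists (K - a1 * b0); lia.
have expand_ab : (a0 * b0 + K) * (K + a1 * b1) = K * ((a0 + a1) * (b0 + b1)) + r * s.
  have : (a0 * b0) * (a1 * b1) = (a0 * b1) * (a1 * b0) by lia.
  nia.
have expand_cd : (c0 * d0 + K) * (K + c1 * d1) = K * ((c0 + c1) * (d0 + d1)).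
  by rewrite /K; lia.
rewrite -(leq_pmul2l Kpos) -expand_cd.
apply: leq_trans (_ : (a0 * b0 + K) * (K + a1 * b1) <= _).
  by rewrite expand_ab leq_addr.
by apply: leq_mul; rewrite ?leq_add2r ?leq_add2l.
Qed.

Section SetFamilies.

Variable T : finType.
Implicit Types (X Y A B : {set {set T}}) (U : {set T}) (z : T).

Definition joins X Y := [set a :|: b | a in X, b in Y].
Definition meets X Y := [set a :&: b | a in X, b in Y].
Definition diffs X Y := [set a :\: b | a in X, b in Y].

Definition slice z (c : bool) X := [set a in X | (z \in a) == c].

Definition equal_off U X := {in X &, forall a a', a :\: U = a' :\: U}.

Lemma card_slice X z : #|X| = #|slice z false X| + #|slice z true X|.
Proof.
rewrite -(cardsID [set a : {set T} | z \notin a] X) /slice.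
by congr (_ + _); apply: eq_card => a; rewrite !inE; case: (z \in a); rewrite ?andbF ?andbT.
Qed.

Lemma joins_slice X Y z (c c' : bool) :
  joins (slice z c X) (slice z c' Y) \subset slice z (c || c') (joins X Y).
Proof.
apply/subsetP=> ? /imset2P[a b]; rewrite !inE => /andP[aX /eqP za] /andP[bY /eqP zb] ->.
by rewrite inE za zb eqxx andbT; apply/imset2P; exists a b.
Qed.

Lemma meets_slice X Y z (c c' : bool) :
  meets (slice z c X) (slice z c' Y) \subset slice z (c && c') (meets X Y).
Proof.
apply/subsetP=> ? /imset2P[a b]; rewrite !inE => /andP[aX /eqP za] /andP[bY /eqP zb] ->.
by rewrite inE za zb eqxx andbT; apply/imset2P; exists a b.
Qed.

Lemma equal_off_slice U X z (c : bool) : z \in U -> equal_off U X ->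
  equal_off (U :\ z) (slice z c X).
Proof.
move=> zU eqX a a'; rewrite !inE => /andP[aX /eqP za] /andP[a'X /eqP za'].
apply/setP=> t; move/setP/(_ t): (eqX _ _ aX a'X); rewrite !inE.
by case: (eqVneq t z) => [->|_] /=; rewrite ?za ?za' ?zU.
Qed.

Lemma card_equal_off0 X : equal_off set0 X -> #|X| <= 1.
Proof.
by move=> eqX; apply/card_le1_eqP=> a a' aX a'X; have := eqX _ _ aX a'X; rewrite !setD0.
Qed.

Lemma card_mul_le_joins_meets_le1 A B : #|A| <= 1 -> #|B| <= 1 ->
  #|A| * #|B| <= #|joins A B| * #|meets A B|.
Proof.
move=> A1 B1.
have [->|[a aA]] := set_0Vmem A; first by rewrite cards0.
have [->|[b bB]] := set_0Vmem B; first by rewrite cards0 muln0.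
have joins_gt0 : 0 < #|joins A B|.
  by apply/card_gt0P; exists (a :|: b); apply/imset2P; exists a b.
have meets_gt0 : 0 < #|meets A B|.
  by apply/card_gt0P; exists (a :&: b); apply/imset2P; exists a b.
by apply: leq_trans (leq_mul A1 B1) _; rewrite muln_gt0 joins_gt0 meets_gt0.
Qed.

(* Daykin's inequality, by induction on the coordinates where the members of
   [A] and of [B] may differ; splitting on one coordinate [z] gives the four
   inequalities of the two-point four functions theorem. *)
Lemma card_mul_le_joins_meets_off U A B : equal_off U A -> equal_off U B ->
  #|A| * #|B| <= #|joins A B| * #|meets A B|.
Proof.
have [k] := ubnP #|U|; elim: k U A B => // k IH U A B ltUk eqA eqB.
have [U0|[z zU]] := set_0Vmem U.
  by rewrite U0 in eqA eqB; apply: card_mul_le_joins_meets_le1; apply: card_equal_off0.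
have IHz (c c' : bool) : #|slice z c A| * #|slice z c' B| <=
    #|slice z (c || c') (joins A B)| * #|slice z (c && c') (meets A B)|.
  have ltUzk : #|U :\ z| < k by move: ltUk; rewrite (cardsD1 z U) zU.
  apply: leq_trans
    (IH _ _ _ ltUzk (equal_off_slice (c:=c) zU eqA) (equal_off_slice (c:=c') zU eqB)) _.
  by apply: leq_mul; apply: subset_leq_card; [apply: joins_slice | apply: meets_slice].
rewrite (card_slice A z) (card_slice B z).
rewrite (card_slice (joins A B) z) (card_slice (meets A B) z).
exact: four_functions_two_point
  (IHz false false) (IHz false true) (IHz true false) (IHz true true).
Qed.

Lemma card_mul_le_joins_meets A B : #|A| * #|B| <= #|joins A B| * #|meets A B|.
Proof. by apply: (@card_mul_le_joins_meets_off setT) => a a' _ _; rewrite !setDT. Qed.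

(* Daykin's inequality for [X] and the complements of [Y]. *)
Lemma card_mul_le_diffs X Y : #|X| * #|Y| <= #|diffs X Y| * #|diffs Y X|.
Proof.
set Yc := [set ~: b | b in Y].
have card_Yc : #|Yc| = #|Y| by rewrite card_imset //; apply: setC_inj.
rewrite -card_Yc; apply: leq_trans (card_mul_le_joins_meets X Yc) _.
rewrite mulnC; apply: leq_mul.
  apply/subset_leq_card/subsetP=> ? /imset2P[a _ aX /imsetP[b bY ->] ->].
  by rewrite -setDE; apply/imset2P; exists a b.
rewrite -(card_imset (joins X Yc) (@setC_inj T)); apply: subset_leq_card.
apply/subsetP=> ? /imsetP[_ /imset2P[a _ aX /imsetP[b bY ->] ->] ->].
by rewrite setCU setCK setIC -setDE; apply/imset2P; exists b a.
Qed.

Lemma diffsSl X X' Y : X \subset X' -> diffs X Y \subset diffs X' Y.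
Proof. exact: imset2Sl. Qed.

Lemma slice_false_sub_true X z z' : {in X, forall a : {set T}, (z \in a) || (z' \in a)} ->
  slice z' false X \subset slice z true X.
Proof.
move=> cover; apply/subsetP=> a; rewrite !inE => /andP[aX /eqP z'a].
by have := cover a aX; rewrite z'a orbF aX => ->.
Qed.

Lemma subset_pair_of_card_le2 (S : {set T}) t : t \in S -> #|S| <= 2 ->
  exists u, S \subset [set t; u].
Proof.
move=> tS S_le2; have [St0|[u uSt]] := set_0Vmem (S :\ t).
  exists t; apply/subsetP=> v vS; rewrite !inE orbb; apply/negPn/negP=> vt.
  have : v \in S :\ t by rewrite !inE vt.
  by rewrite St0 inE.
have St_le1 : #|S :\ t| <= 1 by move: S_le2; rewrite (cardsD1 t S) tS.
exists u; apply/subsetP=> v vS; rewrite !inE; case: eqVneq => //= vt.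
by apply/eqP/(card_le1_eqP St_le1); rewrite // !inE vt.
Qed.

End SetFamilies.

Lemma coversT n (F : {set {set 'I_n}}) : set0 \notin F -> covers setT F.
Proof.
by move=> F0; apply/forall_inP=> A AF; rewrite setTI; apply: contraNneq F0 => <-.
Qed.

Lemma tau_cover n (F : {set {set 'I_n}}) : set0 \notin F ->
  exists2 T, covers T F & #|T| <= tau F.
Proof.
move=> F0; have : [exists T, covers T F && (#|T| <= tau F)].
  apply: contraT => /existsPn too_large; suff : tau F < tau F by rewrite ltnn.
  rewrite {2}/tau; apply: (big_ind (fun m => tau F < m)) => [|a b|T coverT].
  - by have := too_large setT; rewrite coversT //= cardsT card_ord -ltnNge.
  - by move=> lt_a lt_b; rewrite leq_min lt_a lt_b.
  - by have := too_large T; rewrite coverT /= -ltnNge.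
by case/existsP=> T /andP[]; exists T.
Qed.

Lemma card_le_degree n (F G : {set {set 'I_n}}) (x : 'I_n) :
  F \subset G -> down_set G -> intersecting F ->
  #|slice x false F| <= #|diffs (slice x true F) (slice x false F)| ->
  #|F| <= degree G x.
Proof.
move=> sFG dG iF card_le; set D := diffs _ _ in card_le.
have D_degree : D \subset [set B in G | x \in B].
  apply/subsetP=> ? /imset2P[a b]; rewrite !inE => /andP[aF xa] /andP[_ xb] ->.
  rewrite !inE (eqP xa) (eqP xb); apply/andP; split=> //.
  exact: dG (subsetP sFG _ aF) (subsetDl a b).
have Fx_degree : slice x true F \subset [set B in G | x \in B].
  by apply/subsetP=> a; rewrite !inE => /andP[aF /eqP ->]; rewrite (subsetP sFG _ aF).
(* [a \ b] misses [b], which lies in the intersecting family [F]. *)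
have Fx_D : slice x true F :&: D = set0.
  apply/setP=> d; rewrite !inE; apply/negbTE/negP=> /andP[/andP[dF _]].
  case/imset2P=> a b _; rewrite inE => /andP[bF _] dE.
  by move: (iF _ _ dF bF); rewrite dE setDE -setIA (setIC (~: b)) setICr setI0 eqxx.
rewrite (card_slice F x) addnC /degree.
apply: leq_trans (leq_add (leqnn _) card_le) _.
rewrite -cardsUI Fx_D cards0 addn0; apply: subset_leq_card.
by rewrite subUset Fx_degree D_degree.
Qed.

Lemma card_le_max_degree_pair n (F G : {set {set 'I_n}}) (x y : 'I_n) :
  F \subset G -> down_set G -> intersecting F ->
  {in F, forall A : {set 'I_n}, (x \in A) || (y \in A)} ->
  #|F| <= maxn (degree G x) (degree G y).
Proof.
move=> sFG dG iF cover.
have cover' : {in F, forall A : {set 'I_n}, (y \in A) || (x \in A)}.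
  by move=> A AF; rewrite orbC cover.
have [le_x|lt_x] := leqP #|slice x false F| #|diffs (slice x true F) (slice x false F)|.
  by rewrite leq_max (card_le_degree sFG dG iF le_x).
have [le_y|lt_y] := leqP #|slice y false F| #|diffs (slice y true F) (slice y false F)|.
  by rewrite leq_max (card_le_degree sFG dG iF le_y) orbT.
have := card_mul_le_diffs (slice y false F) (slice x false F).
rewrite mulnC leqNgt ltn_mul //.
  exact: leq_ltn_trans (subset_leq_card (diffsSl _ (slice_false_sub_true cover))) lt_x.
exact: leq_ltn_trans (subset_leq_card (diffsSl _ (slice_false_sub_true cover'))) lt_y.
Qed.

Theorem theorem1p7 (n : nat) (F G : {set {set 'I_n}}) :
  F \subset G -> down_set G -> intersecting F -> tau F <= 2 ->
  #|F| <= \max_(x : 'I_n) degree G x.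
Proof.
move=> sFG dG iF tau_le2.
have [->|[A AF]] := set_0Vmem F; first by rewrite cards0.
have F0 : set0 \notin F by apply/negP=> F0; have := iF _ _ F0 F0; rewrite setI0 eqxx.
have [S coverS S_le] := tau_cover F0.
have [x xS] : exists x, x \in S.
  by have /set0Pn[x /setIP[xS _]] := forall_inP coverS A AF; exists x.
have [y S_xy] := subset_pair_of_card_le2 xS (leq_trans S_le tau_le2).
have cover : {in F, forall B : {set 'I_n}, (x \in B) || (y \in B)}.
  move=> B BF; have /set0Pn[t /setIP[tS tB]] := forall_inP coverS B BF.
  by move: (subsetP S_xy t tS); rewrite !inE => /orP[] /eqP <-; rewrite tB ?orbT.
apply: leq_trans (card_le_max_degree_pair sFG dG iF cover) _.
by rewrite geq_max !leq_bigmax.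
Qed.
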